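(* Let $\mathfrak{M}=(S,\mathcal{L})$ be a partial Steiner triple system and let $H_1,H_2$ be distinct hyperplanes of $\mathfrak{M}$. Then the set $$H_1\pitchfork H_2:=(H_1\cap H_2)\cup\big((S\setminus H_1)\cap(S\setminus H_2)\big)=S\setminus(H_1\,\triangle\, H_2)$$ is also a hyperplane of $\mathfrak{M}$.
   Context: A partial Steiner triple system (PSTS) is a partial linear space $(S,\mathcal{L})$ (any two distinct points lie on at most one line) in which every line has exactly $3$ points and every point lies on the same number of lines. A subspace of $\mathfrak{M}$ is a set $U\subseteq S$ such that every line having at least two points in $U$ is contained in $U$. A hyperplane of $\mathfrak{M}$ is a proper subspace $H\subsetneq S$ which meets every line of $\mathfrak{M}$. $\triangle$ denotes symmetric difference. *)

From Stdlib Require Import Classical.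

Definition line_set (P : Type) := (P -> Prop) -> Prop.

Definition three_point_lines {P : Type} (Ls : line_set P) : Prop :=
  forall l, Ls l -> exists a b c : P,
    a <> b /\ a <> c /\ b <> c /\ (forall x, l x <-> (x = a \/ x = b \/ x = c)).

Definition partial_linear {P : Type} (Ls : line_set P) : Prop :=
  forall l1 l2 x y, Ls l1 -> Ls l2 -> x <> y ->
    l1 x -> l1 y -> l2 x -> l2 y -> forall z, l1 z <-> l2 z.

Definition lines_through {P : Type} (Ls : line_set P) (p : P) : Type :=
  { l : P -> Prop | Ls l /\ l p }.

(* every point lies on the same number of lines (equal cardinalities,
   expressed by bijections, so that infinite systems are allowed) *)
Definition regular {P : Type} (Ls : line_set P) : Prop :=
  forall p q : P, exists (f : lines_through Ls p -> lines_through Ls q)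
                         (g : lines_through Ls q -> lines_through Ls p),
    (forall u, g (f u) = u) /\ (forall v, f (g v) = v).

Definition PSTS {P : Type} (Ls : line_set P) : Prop :=
  partial_linear Ls /\ three_point_lines Ls /\ regular Ls.

Definition subspace {P : Type} (Ls : line_set P) (U : P -> Prop) : Prop :=
  forall l x y, Ls l -> l x -> l y -> x <> y -> U x -> U y ->
    forall z, l z -> U z.

Definition hyperplane {P : Type} (Ls : line_set P) (H : P -> Prop) : Prop :=
  subspace Ls H /\ (exists x, ~ H x) /\
  (forall l, Ls l -> exists x, l x /\ H x).

Definition pitchfork {P : Type} (H1 H2 : P -> Prop) : P -> Prop :=
  fun x => (H1 x /\ H2 x) \/ (~ H1 x /\ ~ H2 x).

From Stdlib Require Import Classical.

(* On a line with three points a hyperplane contains either one point or all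
   three, i.e. it meets every line in an odd number of points; with three
   points this parity condition reads [U a <-> (U b <-> U c)].  Since
   [pitchfork H1 H2 x] is [H1 x <-> H2 x], parity is preserved by taking the
   pitchfork of two such sets, and conversely every set meeting all lines
   oddly and missing some point is a hyperplane.  The pitchfork misses a
   point exactly because H1 and H2 differ. *)

Definition triple_line {P : Type} (l : P -> Prop) (a b c : P) : Prop :=
  a <> b /\ a <> c /\ b <> c /\ (forall x, l x <-> (x = a \/ x = b \/ x = c)).

Definition meets_oddly {P : Type} (U : P -> Prop) (a b c : P) : Prop :=
  U a <-> (U b <-> U c).

Section OddMeeting.

Variables (P : Type) (Ls : line_set P).

Lemma hyperplane_meets_oddly (H : P -> Prop) l a b c :
  hyperplane Ls H -> Ls l -> triple_line l a b c -> meets_oddly H a b c.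
Proof.
  intros [Hsub [_ Hmeet]] Hl [ab [ac [bc Hx]]].
  assert (la : l a) by (apply Hx; auto).
  assert (lb : l b) by (apply Hx; auto).
  assert (lc : l c) by (apply Hx; auto).
  destruct (Hmeet l Hl) as [w [lw Hw]].
  apply Hx in lw.
  unfold meets_oddly.
  destruct (classic (H a)) as [Ha|Ha], (classic (H b)) as [Hb|Hb],
    (classic (H c)) as [Hc|Hc]; try tauto.
  - elim Hc; apply (Hsub l a b); auto.
  - elim Hb; apply (Hsub l a c); auto.
  - elim Ha; apply (Hsub l b c); auto.
  - destruct lw as [->|[->| ->]]; tauto.
Qed.

Lemma meets_oddly_hyperplane (U : P -> Prop) :
  three_point_lines Ls ->
  (forall l a b c, Ls l -> triple_line l a b c -> meets_oddly U a b c) ->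
  (exists x, ~ U x) -> hyperplane Ls U.
Proof.
  intros T3 Hodd Hproper; split; [|split; [exact Hproper|]].
  - intros l x y Hl lx ly xy Ux Uy z lz.
    destruct (T3 l Hl) as [a [b [c Habc]]].
    pose proof (Hodd l a b c Hl Habc) as Hab.
    destruct Habc as [_ [_ [_ Hx]]].
    unfold meets_oddly in Hab.
    apply Hx in lx; apply Hx in ly; apply Hx in lz.
    destruct lx as [->|[->| ->]], ly as [->|[->| ->]], lz as [->|[->| ->]];
      tauto.
  - intros l Hl.
    destruct (T3 l Hl) as [a [b [c Habc]]].
    pose proof (Hodd l a b c Hl Habc) as Hab.
    destruct Habc as [_ [_ [_ Hx]]].
    unfold meets_oddly in Hab.
    destruct (classic (U a)) as [Ha|Ha]; [exists a; split; [apply Hx|]; auto|].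
    destruct (classic (U b)) as [Hb|Hb]; [exists b; split; [apply Hx|]; auto|].
    exists c; split; [apply Hx; auto|tauto].
Qed.

End OddMeeting.

Lemma pitchfork_meets_oddly {P : Type} (H1 H2 : P -> Prop) a b c :
  meets_oddly H1 a b c -> meets_oddly H2 a b c ->
  meets_oddly (pitchfork H1 H2) a b c.
Proof.
  unfold meets_oddly, pitchfork.
  destruct (classic (H1 a)), (classic (H1 b)), (classic (H1 c)),
    (classic (H2 a)), (classic (H2 b)), (classic (H2 c)); tauto.
Qed.

Lemma pitchfork_proper {P : Type} (H1 H2 : P -> Prop) :
  ~ (forall x, H1 x <-> H2 x) -> exists x, ~ pitchfork H1 H2 x.
Proof.
  intros Hne; apply NNPP; intros Hall; apply Hne; intros x.
  destruct (classic (H1 x)), (classic (H2 x)); try tauto;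
    exfalso; apply Hall; exists x; unfold pitchfork; tauto.
Qed.

Theorem proposition1p5 (P : Type) (Ls : line_set P) (H1 H2 : P -> Prop) :
  PSTS Ls -> hyperplane Ls H1 -> hyperplane Ls H2 ->
  ~ (forall x, H1 x <-> H2 x) ->
  hyperplane Ls (pitchfork H1 H2).
Proof.
  intros [_ [T3 _]] h1 h2 hne.
  apply meets_oddly_hyperplane; [exact T3| |exact (pitchfork_proper H1 H2 hne)].
  intros l a b c Hl Habc.
  apply pitchfork_meets_oddly; eapply hyperplane_meets_oddly; eassumption.
Qed.
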